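(* The category $\mathbf{USppQu}$ of unitally supported quantales is a full and reflective subcategory of $\mathbf{SppUQu}$. For each object $(Q,\varsigma)$ of $\mathbf{SppUQu}$ the reflection $\eta:(Q,\varsigma)\to(Q,\varsigma_e)$ is obtained by defining the unital support $\varsigma_e(x)=\varsigma(x)\triangleright e$ for all $x\in Q$ and setting $\eta_1=\mathrm{id}_Q$ and $\eta_0(a)=a\triangleright e$ for all $a\in Q_0$.
   Context: For a locale $A$, an $A$-$A$-bimodule is a sup-lattice $M$ with actions $a\triangleright m$, $m\triangleleft a$ preserving joins in each variable, with $1_A\triangleright m=m$, $(a\wedge b)\triangleright m=a\triangleright(b\triangleright m)$, $m\triangleleft1_A=m$, $m\triangleleft(a\wedge b)=(m\triangleleft a)\triangleleft b$, $(a\triangleright m)\triangleleft b=a\triangleright(m\triangleleft b)$. An $A$-$A$-quantale is such a $Q$ with associative join-preserving multiplication and $(a\triangleright x)y=a\triangleright(xy)$, $(x\triangleleft a)y=x(a\triangleright y)$, $(xy)\triangleleft a=x(y\triangleleft a)$; involutive if there is a join-preserving $x\mapsto x^*$ with $x^{**}=x$, $(xy)^*=y^*x^*$, $(a\triangleright(x\triangleleft b))^*=b\triangleright(x^*\triangleleft a)$. A based quantale is an involutive $Q_0$-$Q_0$-quantale for a locale $Q_0$; a support is a join-preserving $\varsigma:Q\to Q_0$ with $\varsigma(1_Q)=1_{Q_0}$, $\varsigma(x)\triangleright y\le xx^*y$, $\varsigma(x)\triangleright x=x$. A morphism of supported quantales $f:Q\to R$ is a pair $(f_1,f_0)$, $f_1$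 a homomorphism of involutive quantales, $f_0:Q_0\to R_0$ a frame homomorphism, with $f_1(a\triangleright x)=f_0(a)\triangleright f_1(x)$, $f_1(x\triangleleft a)=f_1(x)\triangleleft f_0(a)$ and $f_0\circ\varsigma_Q=\varsigma_R\circ f_1$. $\mathbf{SppUQu}$: supported quantales whose quantale $Q$ has a multiplicative unit $e$, with morphisms such that $f_1$ preserves the unit. A unital support on a unital involutive quantale $Q$ is a join-preserving $\varsigma:Q\to Q$ with $\varsigma(x)\le e$, $\varsigma(x)\le xx^*$, $x\le\varsigma(x)x$; $\mathbf{USppQu}$ has these as objects and unital involutive quantale homomorphisms commuting with supports as morphisms. $\mathbf{USppQu}$ is identified with a subcategory of $\mathbf{SppUQu}$ by regarding $(Q,\varsigma)$ as a based quantale with $Q_0={\downarrow}e$ and actions $a\triangleright x=ax$, $x\triangleleft a=xa$, and a morphism $f$ as $(f,f|_{{\downarrow}e})$. *)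

From Stdlib Require Import ClassicalEpsilon ProofIrrelevance.
Set Implicit Arguments.

Record SupLat := {
  sl_car :> Type;
  sl_le : sl_car -> sl_car -> Prop;
  sl_sup : (sl_car -> Prop) -> sl_car;
  sl_refl : forall x, sl_le x x;
  sl_trans : forall x y z, sl_le x y -> sl_le y z -> sl_le x z;
  sl_antisym : forall x y, sl_le x y -> sl_le y x -> x = y;
  sl_sup_ub : forall S x, S x -> sl_le x (sl_sup S);
  sl_sup_least : forall S y, (forall x, S x -> sl_le x y) -> sl_le (sl_sup S) y }.

Arguments sl_le {s} _ _.
Arguments sl_sup {s} _.

Definition image {A B : Type} (f : A -> B) (S : A -> Prop) : B -> Prop :=
  fun y => exists x, S x /\ y = f x.

Definition joinpres {L M : SupLat} (f : L -> M) : Prop :=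
  forall S : L -> Prop, f (sl_sup S) = sl_sup (image f S).

Definition meet {L : SupLat} (a b : L) : L :=
  sl_sup (fun c => sl_le c a /\ sl_le c b).
Definition top (L : SupLat) : L := sl_sup (fun _ => True).

Definition is_frame (L : SupLat) : Prop :=
  forall (a : L) (S : L -> Prop), meet a (sl_sup S) = sl_sup (image (meet a) S).

Definition frame_hom {L M : SupLat} (f : L -> M) : Prop :=
  joinpres f /\ (forall a b, f (meet a b) = meet (f a) (f b)) /\ f (top L) = top M.

Record SQ := {
  sq_Q : SupLat;
  sq_Q0 : SupLat;
  sq_lact : sq_Q0 -> sq_Q -> sq_Q;      (* a |> x *)
  sq_ract : sq_Q -> sq_Q0 -> sq_Q;
  sq_mul : sq_Q -> sq_Q -> sq_Q;
  sq_inv : sq_Q -> sq_Q;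
  sq_supp : sq_Q -> sq_Q0;
  sq_e : sq_Q }.

(** ... and axioms: supported quantale with a multiplicative unit *)
Record is_SppUQu (A : SQ) : Prop := {
  spp_frame : is_frame (sq_Q0 A);
  spp_lact_jr : forall a, joinpres (sq_lact A a);
  spp_lact_jl : forall x, joinpres (fun a => sq_lact A a x);
  spp_ract_jl : forall a, joinpres (fun x => sq_ract A x a);
  spp_ract_jr : forall x, joinpres (sq_ract A x);
  spp_lact_top : forall x, sq_lact A (top (sq_Q0 A)) x = x;
  spp_lact_meet : forall a b x, sq_lact A (meet a b) x = sq_lact A a (sq_lact A b x);
  spp_ract_top : forall x, sq_ract A x (top (sq_Q0 A)) = x;
  spp_ract_meet : forall a b x, sq_ract A x (meet a b) = sq_ract A (sq_ract A x a) b;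
  spp_lr : forall a b x, sq_ract A (sq_lact A a x) b = sq_lact A a (sq_ract A x b);
  spp_assoc : forall x y z, sq_mul A x (sq_mul A y z) = sq_mul A (sq_mul A x y) z;
  spp_mul_jr : forall x, joinpres (sq_mul A x);
  spp_mul_jl : forall y, joinpres (fun x => sq_mul A x y);
  spp_lact_mul : forall a x y, sq_mul A (sq_lact A a x) y = sq_lact A a (sq_mul A x y);
  spp_ract_mul : forall a x y, sq_mul A (sq_ract A x a) y = sq_mul A x (sq_lact A a y);
  spp_mul_ract : forall a x y, sq_ract A (sq_mul A x y) a = sq_mul A x (sq_ract A y a);
  spp_inv_j : joinpres (sq_inv A);
  spp_inv_inv : forall x, sq_inv A (sq_inv A x) = x;
  spp_inv_mul : forall x y, sq_inv A (sq_mul A x y) = sq_mul A (sq_inv A y) (sq_inv A x);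
  spp_inv_act : forall a b x,
    sq_inv A (sq_lact A a (sq_ract A x b)) = sq_lact A b (sq_ract A (sq_inv A x) a);
  spp_supp_j : joinpres (sq_supp A);
  spp_supp_top : sq_supp A (top (sq_Q A)) = top (sq_Q0 A);
  spp_supp_le : forall x y,
    sl_le (sq_lact A (sq_supp A x) y) (sq_mul A (sq_mul A x (sq_inv A x)) y);
  spp_supp_act : forall x, sq_lact A (sq_supp A x) x = x;
  spp_unit_l : forall x, sq_mul A (sq_e A) x = x;
  spp_unit_r : forall x, sq_mul A x (sq_e A) = x }.

Record SppUQu_mor (A B : SQ) (f1 : sq_Q A -> sq_Q B) (f0 : sq_Q0 A -> sq_Q0 B) : Prop := {
  sm_j : joinpres f1;
  sm_mul : forall x y, f1 (sq_mul A x y) = sq_mul B (f1 x) (f1 y);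
  sm_inv : forall x, f1 (sq_inv A x) = sq_inv B (f1 x);
  sm_unit : f1 (sq_e A) = sq_e B;
  sm_frame : frame_hom f0;
  sm_lact : forall a x, f1 (sq_lact A a x) = sq_lact B (f0 a) (f1 x);
  sm_ract : forall a x, f1 (sq_ract A x a) = sq_ract B (f1 x) (f0 a);
  sm_supp : forall x, f0 (sq_supp A x) = sq_supp B (f1 x) }.

Record USQ := {
  uq_Q : SupLat;
  uq_mul : uq_Q -> uq_Q -> uq_Q;
  uq_inv : uq_Q -> uq_Q;
  uq_e : uq_Q;
  uq_supp : uq_Q -> uq_Q }.

Record is_USppQu (R : USQ) : Prop := {
  usp_assoc : forall x y z, uq_mul R x (uq_mul R y z) = uq_mul R (uq_mul R x y) z;
  usp_mul_jr : forall x, joinpres (uq_mul R x);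
  usp_mul_jl : forall y, joinpres (fun x => uq_mul R x y);
  usp_unit_l : forall x, uq_mul R (uq_e R) x = x;
  usp_unit_r : forall x, uq_mul R x (uq_e R) = x;
  usp_inv_j : joinpres (uq_inv R);
  usp_inv_inv : forall x, uq_inv R (uq_inv R x) = x;
  usp_inv_mul : forall x y, uq_inv R (uq_mul R x y) = uq_mul R (uq_inv R y) (uq_inv R x);
  usp_supp_j : joinpres (uq_supp R);
  usp_supp_e : forall x, sl_le (uq_supp R x) (uq_e R);
  usp_supp_xx : forall x, sl_le (uq_supp R x) (uq_mul R x (uq_inv R x));
  usp_supp_x : forall x, sl_le x (uq_mul R (uq_supp R x) x) }.

Record USppQu_mor (R S : USQ) (g : uq_Q R -> uq_Q S) : Prop := {
  um_j : joinpres g;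
  um_mul : forall x y, g (uq_mul R x y) = uq_mul S (g x) (g y);
  um_inv : forall x, g (uq_inv R x) = uq_inv S (g x);
  um_unit : g (uq_e R) = uq_e S;
  um_supp : forall x, g (uq_supp R x) = uq_supp S (g x) }.

Section Down.
Variables (L : SupLat) (e : L).

Definition down_sup (S : {x : L | sl_le x e} -> Prop) : {x : L | sl_le x e}.
Proof.
  exists (sl_sup (image (@proj1_sig _ _) S)).
  apply sl_sup_least. intros x [[y Hy] [_ ->]]. exact Hy.
Defined.

Definition downSL : SupLat.
Proof.
  refine (@Build_SupLat {x : L | sl_le x e}
            (fun x y => sl_le (proj1_sig x) (proj1_sig y)) down_sup _ _ _ _ _).
  - intros x; apply sl_refl.
  - intros x y z; apply sl_trans.
  - intros [x px] [y py] H1 H2; simpl in *.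
    assert (x = y) by (apply sl_antisym; assumption). subst y.
    f_equal; apply proof_irrelevance.
  - intros S x Sx; simpl. apply sl_sup_ub. exists x; auto.
  - intros S y H; simpl. apply sl_sup_least. intros x [z [Sz ->]]. apply H, Sz.
Defined.

(** total corestriction  L -> ↓e  (identity on elements below e; junk value e otherwise) *)
Definition todown (x : L) : downSL :=
  match excluded_middle_informative (sl_le x e) with
  | left p => exist (fun y => sl_le y e) x p
  | right _ => exist (fun y => sl_le y e) e (sl_refl _ e)
  end.
End Down.
Arguments downSL {L} e.
Arguments todown {L} e x.
Arguments down_sup {L} e S.

(** * The embedding USppQu -> SppUQu: Q_0 = ↓e, actions = multiplication *)
Definition J (R : USQ) : SQ := {|
  sq_Q := uq_Q R;
  sq_Q0 := downSL (uq_e R);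
  sq_lact := fun (a : downSL (uq_e R)) x => uq_mul R (proj1_sig a) x;
  sq_ract := fun x (a : downSL (uq_e R)) => uq_mul R x (proj1_sig a);
  sq_mul := uq_mul R;
  sq_inv := uq_inv R;
  sq_supp := fun x => todown (uq_e R) (uq_supp R x);
  sq_e := uq_e R |}.

Definition Jmor (R S : USQ) (g : uq_Q R -> uq_Q S) :
  downSL (uq_e R) -> downSL (uq_e S) :=
  fun a => todown (uq_e S) (g (proj1_sig a)).

Definition supp_e (A : SQ) (x : sq_Q A) : sq_Q A := sq_lact A (sq_supp A x) (sq_e A).

Definition reflU (A : SQ) : USQ := {|
  uq_Q := sq_Q A; uq_mul := sq_mul A; uq_inv := sq_inv A;
  uq_e := sq_e A; uq_supp := supp_e A |}.

Definition eta0 (A : SQ) : sq_Q0 A -> downSL (sq_e A) :=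
  fun a => todown (sq_e A) (sq_lact A a (sq_e A)).

From Stdlib Require Import ClassicalEpsilon ProofIrrelevance.
Set Implicit Arguments.

(* Below the unit e of a unitally supported quantale every element is a
   self-adjoint idempotent with [ς a = a], so on ↓e multiplication is the meet
   and ↓e is a locale; this makes J R a supported quantale.  Conversely
   [ς_e x = ς x ▷ e] is a unital support on any object of SppUQu.  A morphism
   (f1, f0) into some J S is determined by f1, because [f0 a = f1 (a ▷ e)]; so
   f1 itself is the unique factorisation through η = (id, a ↦ a ▷ e), which is
   reflectivity, and for A = J R (where ς_e = ς) the same fact gives fullness. *)

Section SupLattice.
Variable L : SupLat.

Lemma sup_ext (S T : L -> Prop) : (forall x, S x <-> T x) -> sl_sup S = sl_sup T.
Proof.
  intros ST; apply sl_antisym; apply sl_sup_least; intros x Hx; apply sl_sup_ub, ST, Hx.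
Qed.

Lemma le_top (x : L) : sl_le x (top L).
Proof. apply sl_sup_ub; exact I. Qed.

Lemma sup_image_id (S : L -> Prop) : sl_sup (image (fun x => x) S) = sl_sup S.
Proof.
  apply sup_ext; intros x; split.
  - intros [y [Sy ->]]; exact Sy.
  - intros Sx; exists x; auto.
Qed.

Lemma sup_image_ext (A : Type) (f g : A -> L) (S : A -> Prop) :
  (forall x, f x = g x) -> sl_sup (image f S) = sl_sup (image g S).
Proof.
  intros fg; apply sup_ext; intros y; split; intros [x [Sx ->]]; exists x; auto.
Qed.

Lemma sup_image_comp (A B : Type) (f : B -> L) (g : A -> B) (S : A -> Prop) :
  sl_sup (image f (image g S)) = sl_sup (image (fun x => f (g x)) S).
Proof.
  apply sup_ext; intros y; split.
  - intros [z [[x [Sx ->]] ->]]; exists x; auto.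
  - intros [x [Sx ->]]; exists (g x); split; [exists x|]; auto.
Qed.

End SupLattice.

Lemma joinpres_ext (L M : SupLat) (f g : L -> M) :
  (forall x, f x = g x) -> joinpres f -> joinpres g.
Proof.
  intros fg Hf S; rewrite <- fg, Hf; apply sup_image_ext, fg.
Qed.

Lemma joinpres_comp (L M N : SupLat) (f : L -> M) (g : M -> N) :
  joinpres f -> joinpres g -> joinpres (fun x => g (f x)).
Proof. intros Hf Hg S; rewrite Hf, Hg; apply sup_image_comp. Qed.

Lemma joinpres_mono (L M : SupLat) (f : L -> M) :
  joinpres f -> forall x y, sl_le x y -> sl_le (f x) (f y).
Proof.
  intros Hf x y xy.
  assert (Exy : sl_sup (fun z => z = x \/ z = y) = y).
  { apply sl_antisym.
    - apply sl_sup_least; intros z [-> | ->]; [exact xy | apply sl_refl].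
    - apply sl_sup_ub; auto. }
  rewrite <- Exy, Hf; apply sl_sup_ub; exists x; auto.
Qed.

Section DownSet.
Variables (L : SupLat) (e : L).

Lemma down_val_inj (a b : downSL e) : proj1_sig a = proj1_sig b -> a = b.
Proof.
  destruct a as [a pa], b as [b pb]; simpl; intros ->; f_equal; apply proof_irrelevance.
Qed.

Lemma down_val_joinpres : joinpres (fun a : downSL e => proj1_sig a).
Proof. intros S; reflexivity. Qed.

Lemma joinpres_to_down (M : SupLat) (f : M -> downSL e) :
  joinpres (fun x => proj1_sig (f x)) -> joinpres f.
Proof.
  intros Hf S; apply down_val_inj; rewrite Hf; symmetry; apply sup_image_comp.
Qed.

Lemma todown_val (x : L) : sl_le x e -> proj1_sig (todown e x) = x.
Proof.
  intros xe; unfold todown; destruct excluded_middle_informative; [reflexivity | contradiction].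
Qed.

Lemma down_top_val : proj1_sig (top (downSL e)) = e.
Proof.
  apply sl_antisym.
  - apply sl_sup_least; intros x [[y ye] [_ ->]]; exact ye.
  - apply sl_sup_ub; exists (exist (fun y => sl_le y e) e (sl_refl _ e)); split; auto.
Qed.

End DownSet.

Section UnitallySupported.
Variable R : USQ.
Hypothesis HR : is_USppQu R.
Local Notation le := (@sl_le (uq_Q R)).
Local Notation m := (uq_mul R).
Local Notation e := (uq_e R).
Local Notation inv := (uq_inv R).
Local Notation supp := (uq_supp R).

Lemma mul_mono_l x y z : le x y -> le (m x z) (m y z).
Proof. exact (joinpres_mono (usp_mul_jl HR z) x y). Qed.

Lemma mul_mono_r x y z : le x y -> le (m z x) (m z y).
Proof. exact (joinpres_mono (usp_mul_jr HR z) x y). Qed.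

Lemma mul_le_l a b : le b e -> le (m a b) a.
Proof.
  intros be; rewrite <- (usp_unit_r HR a) at 2; apply mul_mono_r, be.
Qed.

Lemma mul_le_r a b : le a e -> le (m a b) b.
Proof.
  intros ae; rewrite <- (usp_unit_l HR b) at 2; apply mul_mono_l, ae.
Qed.

Lemma inv_unit : inv e = e.
Proof.
  assert (E : inv (m e (inv e)) = e) by now rewrite (usp_unit_l HR), (usp_inv_inv HR).
  now rewrite (usp_inv_mul HR), (usp_inv_inv HR), (usp_unit_l HR) in E.
Qed.

Lemma mul_inv_le a : le a e -> le (m a (inv a)) a.
Proof.
  intros ae; apply mul_le_l; rewrite <- inv_unit; exact (joinpres_mono (usp_inv_j HR) _ _ ae).
Qed.

Lemma supp_below_unit a : le a e -> supp a = a.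
Proof.
  intros ae; apply sl_antisym.
  - eapply sl_trans; [apply (usp_supp_xx HR) | apply mul_inv_le, ae].
  - eapply sl_trans; [apply (usp_supp_x HR) |].
    rewrite <- (usp_unit_r HR (supp a)) at 2; apply mul_mono_r, ae.
Qed.

Lemma mul_inv_below_unit a : le a e -> m a (inv a) = a.
Proof.
  intros ae; apply sl_antisym; [apply mul_inv_le, ae |].
  rewrite <- (supp_below_unit _ ae) at 1; apply (usp_supp_xx HR).
Qed.

Lemma inv_below_unit a : le a e -> inv a = a.
Proof.
  intros ae; rewrite <- (mul_inv_below_unit _ ae) at 1.
  rewrite (usp_inv_mul HR), (usp_inv_inv HR); apply mul_inv_below_unit, ae.
Qed.

Lemma mul_idem_below_unit a : le a e -> m a a = a.
Proof. intros ae; rewrite <- (inv_below_unit _ ae) at 2; apply mul_inv_below_unit, ae. Qed.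

Lemma down_meet_val (a b : downSL e) :
  proj1_sig (meet a b) = m (proj1_sig a) (proj1_sig b).
Proof.
  destruct a as [a ae], b as [b be]; simpl; apply sl_antisym.
  - apply sl_sup_least; intros x [[c ce] [[ca cb] ->]]; simpl in *.
    rewrite <- (mul_idem_below_unit _ ce).
    eapply sl_trans; [apply mul_mono_l, ca | apply mul_mono_r, cb].
  - assert (abe : le (m a b) e) by (eapply sl_trans; [apply mul_le_l, be | exact ae]).
    apply sl_sup_ub; exists (exist (fun y => le y e) (m a b) abe); simpl.
    split; [split; [apply mul_le_l, be | apply mul_le_r, ae] | reflexivity].
Qed.

Lemma supp_top : supp (top (uq_Q R)) = e.
Proof.
  apply sl_antisym; [apply (usp_supp_e HR) |].
  rewrite <- (supp_below_unit _ (sl_refl _ e)) at 1.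
  exact (joinpres_mono (usp_supp_j HR) _ _ (le_top _ e)).
Qed.

Lemma supp_mul_self x : m (supp x) x = x.
Proof.
  apply sl_antisym; [apply mul_le_r, (usp_supp_e HR) | apply (usp_supp_x HR)].
Qed.

Lemma J_supp_val x : proj1_sig (sq_supp (J R) x) = supp x.
Proof. apply todown_val, (usp_supp_e HR). Qed.

Lemma supp_e_J x : supp_e (J R) x = supp x.
Proof. unfold supp_e; cbn [J sq_lact sq_e]; rewrite J_supp_val; apply (usp_unit_r HR). Qed.

Lemma J_frame : is_frame (sq_Q0 (J R)).
Proof.
  intros a; apply joinpres_to_down.
  apply joinpres_ext with (fun b : downSL e => m (proj1_sig a) (proj1_sig b)).
  - intros b; symmetry; apply down_meet_val.
  - apply joinpres_comp; [apply down_val_joinpres | apply (usp_mul_jr HR)].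
Qed.

Lemma J_supp_joinpres : joinpres (sq_supp (J R)).
Proof.
  apply joinpres_to_down, joinpres_ext with supp; [intros x; symmetry; apply J_supp_val |].
  apply (usp_supp_j HR).
Qed.

End UnitallySupported.

Lemma J_is_SppUQu (R : USQ) : is_USppQu R -> is_SppUQu (J R).
Proof.
  intros HR; pose proof (usp_assoc HR) as assoc.
  constructor; cbn [J sq_Q sq_Q0 sq_lact sq_ract sq_mul sq_inv sq_e].
  - apply J_frame, HR.
  - intros a; apply (usp_mul_jr HR).
  - intros x; exact (joinpres_comp (@down_val_joinpres _ (uq_e R)) (usp_mul_jl HR x)).
  - intros a; apply (usp_mul_jl HR).
  - intros x; exact (joinpres_comp (@down_val_joinpres _ (uq_e R)) (usp_mul_jr HR x)).
  - intros x; rewrite down_top_val; apply (usp_unit_l HR).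
  - intros a b x; rewrite down_meet_val by exact HR; symmetry; apply assoc.
  - intros x; rewrite down_top_val; apply (usp_unit_r HR).
  - intros a b x; rewrite down_meet_val by exact HR; apply assoc.
  - intros a b x; symmetry; apply assoc.
  - exact assoc.
  - apply (usp_mul_jr HR).
  - apply (usp_mul_jl HR).
  - intros a x y; symmetry; apply assoc.
  - intros a x y; symmetry; apply assoc.
  - intros a x y; symmetry; apply assoc.
  - apply (usp_inv_j HR).
  - apply (usp_inv_inv HR).
  - apply (usp_inv_mul HR).
  - intros [a ae] [b be] x; simpl.
    rewrite !(usp_inv_mul HR), (inv_below_unit HR _ ae), (inv_below_unit HR _ be).
    symmetry; apply assoc.
  - apply J_supp_joinpres, HR.
  - apply down_val_inj; rewrite down_top_val; exact (eq_trans (J_supp_val HR _) (supp_top HR)).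
  - intros x y; rewrite (J_supp_val HR); apply (mul_mono_l HR), (usp_supp_xx HR).
  - intros x; rewrite (J_supp_val HR); apply supp_mul_self, HR.
  - apply (usp_unit_l HR).
  - apply (usp_unit_r HR).
Qed.

Section MorphismsIntoJ.
Variables (R S : USQ) (g : uq_Q R -> uq_Q S).
Hypothesis Hg : USppQu_mor R S g.

Lemma USppQu_mor_below_unit a : sl_le a (uq_e R) -> sl_le (g a) (uq_e S).
Proof. intros ae; rewrite <- (um_unit Hg); exact (joinpres_mono (um_j Hg) _ _ ae). Qed.

Lemma Jmor_val (a : downSL (uq_e R)) : proj1_sig (Jmor R S g a) = g (proj1_sig a).
Proof. apply todown_val, USppQu_mor_below_unit, (proj2_sig a). Qed.

Lemma J_mor : is_USppQu R -> is_USppQu S -> SppUQu_mor (J R) (J S) g (Jmor R S g).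
Proof.
  intros HR HS.
  constructor; cbn [J sq_Q sq_Q0 sq_lact sq_ract sq_mul sq_inv sq_e].
  - exact (um_j Hg).
  - exact (um_mul Hg).
  - exact (um_inv Hg).
  - exact (um_unit Hg).
  - split; [| split].
    + apply joinpres_to_down, joinpres_ext with (fun a => g (proj1_sig a)).
      * intros a; symmetry; apply Jmor_val.
      * exact (joinpres_comp (@down_val_joinpres _ (uq_e R)) (um_j Hg)).
    + intros a b; apply down_val_inj.
      rewrite Jmor_val, (down_meet_val HR), (down_meet_val HS), !Jmor_val; apply (um_mul Hg).
    + apply down_val_inj; rewrite Jmor_val, !down_top_val; apply (um_unit Hg).
  - intros a x; rewrite Jmor_val; apply (um_mul Hg).
  - intros a x; rewrite Jmor_val; apply (um_mul Hg).
  - intros x; apply down_val_inj; rewrite Jmor_val, (J_supp_val HR), (J_supp_val HS).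
    apply (um_supp Hg).
Qed.

End MorphismsIntoJ.

Section MorphismsFromJ.
Variables (A : SQ) (S : USQ) (f1 : sq_Q A -> sq_Q (J S)) (f0 : sq_Q0 A -> sq_Q0 (J S)).
Hypotheses (HS : is_USppQu S) (Hf : SppUQu_mor A (J S) f1 f0).

Lemma SppUQu_mor_J_base_val a : f1 (sq_lact A a (sq_e A)) = proj1_sig (f0 a).
Proof. rewrite (sm_lact Hf), (sm_unit Hf); apply (usp_unit_r HS). Qed.

Lemma SppUQu_mor_J_supp_e x : f1 (supp_e A x) = uq_supp S (f1 x).
Proof. unfold supp_e; rewrite SppUQu_mor_J_base_val, (sm_supp Hf); apply (J_supp_val HS). Qed.

Lemma SppUQu_mor_J_USppQu_mor : USppQu_mor (reflU A) S f1.
Proof.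
  constructor.
  - exact (sm_j Hf).
  - exact (sm_mul Hf).
  - exact (sm_inv Hf).
  - exact (sm_unit Hf).
  - exact SppUQu_mor_J_supp_e.
Qed.

End MorphismsFromJ.

Lemma J_full (R S : USQ) (f1 : sq_Q (J R) -> sq_Q (J S)) (f0 : sq_Q0 (J R) -> sq_Q0 (J S)) :
  is_USppQu R -> is_USppQu S -> SppUQu_mor (J R) (J S) f1 f0 ->
  exists g : uq_Q R -> uq_Q S,
    USppQu_mor R S g /\ (forall x, f1 x = g x) /\ (forall a, f0 a = Jmor R S g a).
Proof.
  intros HR HS Hf.
  pose proof (SppUQu_mor_J_USppQu_mor HS Hf) as Hrefl.
  assert (Hg : USppQu_mor R S f1).
  { constructor; try apply Hrefl.
    intros x; rewrite <- (supp_e_J HR x); apply (um_supp Hrefl). }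
  exists f1; split; [exact Hg | split; [reflexivity |]].
  intros a; apply down_val_inj; rewrite (Jmor_val Hg), <- (SppUQu_mor_J_base_val HS Hf).
  f_equal; apply (usp_unit_r HR).
Qed.

Section Reflection.
Variable A : SQ.
Hypothesis HA : is_SppUQu A.

Lemma lact_unit_below_unit a : sl_le (sq_lact A a (sq_e A)) (sq_e A).
Proof.
  rewrite <- (spp_lact_top HA (sq_e A)) at 2.
  exact (joinpres_mono (spp_lact_jl HA (sq_e A)) _ _ (le_top _ a)).
Qed.

Lemma reflU_is_USppQu : is_USppQu (reflU A).
Proof.
  constructor; cbn [reflU uq_Q uq_mul uq_inv uq_e uq_supp]; unfold supp_e.
  - exact (spp_assoc HA).
  - exact (spp_mul_jr HA).
  - exact (spp_mul_jl HA).
  - exact (spp_unit_l HA).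
  - exact (spp_unit_r HA).
  - exact (spp_inv_j HA).
  - exact (spp_inv_inv HA).
  - exact (spp_inv_mul HA).
  - exact (joinpres_comp (spp_supp_j HA) (spp_lact_jl HA (sq_e A))).
  - intros x; apply lact_unit_below_unit.
  - intros x; rewrite <- (spp_unit_r HA (sq_mul A x (sq_inv A x))); apply (spp_supp_le HA).
  - intros x; rewrite (spp_lact_mul HA), (spp_unit_l HA), (spp_supp_act HA); apply sl_refl.
Qed.

Lemma eta0_val a : proj1_sig (eta0 A a) = sq_lact A a (sq_e A).
Proof. apply todown_val, lact_unit_below_unit. Qed.

Lemma eta_mor : SppUQu_mor A (J (reflU A)) (fun x => x) (eta0 A).
Proof.
  (* the fields closed by [reflexivity] hold by conversion: η1 is the identity
     and [ς_e = η0 ∘ ς] *)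
  constructor; cbn [J reflU sq_Q sq_Q0 sq_lact sq_ract sq_mul sq_inv sq_supp sq_e
                    uq_Q uq_mul uq_inv uq_e uq_supp]; try reflexivity.
  - intros T; symmetry; apply sup_image_id.
  - split; [| split].
    + apply joinpres_to_down, joinpres_ext with (fun a => sq_lact A a (sq_e A)).
      * intros a; symmetry; apply eta0_val.
      * apply (spp_lact_jl HA).
    + intros a b; apply down_val_inj.
      rewrite (down_meet_val reflU_is_USppQu); cbn [reflU uq_mul].
      rewrite !eta0_val, (spp_lact_meet HA), (spp_lact_mul HA), (spp_unit_l HA).
      reflexivity.
    + apply down_val_inj; rewrite eta0_val, (spp_lact_top HA).
      symmetry; exact (@down_top_val _ (sq_e A)).
  - intros a x; rewrite eta0_val, (spp_lact_mul HA), (spp_unit_l HA); reflexivity.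
  - intros a x; rewrite eta0_val, <- (spp_ract_mul HA), (spp_unit_r HA); reflexivity.
Qed.

Lemma eta_universal (S : USQ) (f1 : sq_Q A -> sq_Q (J S)) (f0 : sq_Q0 A -> sq_Q0 (J S)) :
  is_USppQu S -> SppUQu_mor A (J S) f1 f0 ->
  exists g : uq_Q (reflU A) -> uq_Q S,
    USppQu_mor (reflU A) S g /\
    (forall x, g x = f1 x) /\
    (forall a, Jmor (reflU A) S g (eta0 A a) = f0 a) /\
    (forall g' : uq_Q (reflU A) -> uq_Q S,
       USppQu_mor (reflU A) S g' ->
       (forall x, g' x = f1 x) ->
       (forall a, Jmor (reflU A) S g' (eta0 A a) = f0 a) ->
       forall x, g' x = g x).
Proof.
  intros HS Hf; pose proof (SppUQu_mor_J_USppQu_mor HS Hf) as Hg.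
  exists f1; split; [exact Hg | split; [reflexivity | split]].
  - intros a; apply down_val_inj.
    rewrite (Jmor_val Hg), eta0_val; apply (SppUQu_mor_J_base_val HS Hf).
  - intros g' _ g'f1 _; exact g'f1.
Qed.

End Reflection.

Theorem lemma3p13 :
  (* USppQu is a subcategory of SppUQu via J (objects and morphisms) *)
  (forall R : USQ, is_USppQu R -> is_SppUQu (J R)) /\
  (forall (R S : USQ) (g : uq_Q R -> uq_Q S),
      is_USppQu R -> is_USppQu S -> USppQu_mor R S g ->
      SppUQu_mor (J R) (J S) g (Jmor R S g)) /\
  (* full *)
  (forall (R S : USQ) (f1 : sq_Q (J R) -> sq_Q (J S)) (f0 : sq_Q0 (J R) -> sq_Q0 (J S)),
      is_USppQu R -> is_USppQu S -> SppUQu_mor (J R) (J S) f1 f0 ->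
      exists g : uq_Q R -> uq_Q S,
        USppQu_mor R S g /\ (forall x, f1 x = g x) /\ (forall a, f0 a = Jmor R S g a)) /\
  (* reflective, with reflection eta = (id, a |-> a |> e) into (Q, varsigma_e) *)
  (forall A : SQ, is_SppUQu A ->
     is_USppQu (reflU A) /\
     SppUQu_mor A (J (reflU A)) (fun x => x) (eta0 A) /\
     (forall (S : USQ) (f1 : sq_Q A -> sq_Q (J S)) (f0 : sq_Q0 A -> sq_Q0 (J S)),
        is_USppQu S -> SppUQu_mor A (J S) f1 f0 ->
        exists g : uq_Q (reflU A) -> uq_Q S,
          USppQu_mor (reflU A) S g /\
          (forall x, g x = f1 x) /\
          (forall a, Jmor (reflU A) S g (eta0 A a) = f0 a) /\
          (forall g' : uq_Q (reflU A) -> uq_Q S,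
             USppQu_mor (reflU A) S g' ->
             (forall x, g' x = f1 x) ->
             (forall a, Jmor (reflU A) S g' (eta0 A a) = f0 a) ->
             forall x, g' x = g x))).
Proof.
  split; [exact J_is_SppUQu |].
  split; [intros R S g HR HS Hg; exact (J_mor Hg HR HS) |].
  split; [exact J_full |].
  intros A HA; split; [exact (reflU_is_USppQu HA) |].
  split; [exact (eta_mor HA) | exact (eta_universal HA)].
Qed.
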